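(* In the structural equation model of the context, for every fixed $\gamma\in\mathbb{R}^q$ and every subset $S\subseteq\{1,\dots,q\}$, the population regression coefficient satisfies $\hat\beta(S)=\beta+\mathbf{C}(S)\gamma$.
   Context: Structural equation model: fix integers $d,q,r\ge1$. Let $N_z\in\mathbb{R}^r$, $N_w\in\mathbb{R}^q$, $N_x\in\mathbb{R}^d$, $N_y\in\mathbb{R}$ be mutually independent zero-mean random vectors with $\operatorname{Cov}(N_z)=I_r$, $\operatorname{Cov}(N_w)=\operatorname{diag}(\sigma_{w,1}^2,\dots,\sigma_{w,q}^2)$ with all $\sigma_{w,i}^2>0$, $\operatorname{Cov}(N_x)=\mathbf{D}_x$ a positive definite diagonal matrix, $\operatorname{Var}(N_y)=\sigma_y^2$. With $\mathbf{A}\in\mathbb{R}^{q\times r}$, $\mathbf{B}\in\mathbb{R}^{d\times r}$, $\beta\in\mathbb{R}^d$, $\gamma\in\mathbb{R}^q$: $Z=N_z$, $W=\mathbf{A}Z+N_w$, $X=\mathbf{B}Z+N_x$, $Y=\beta^\top X+\gamma^\top W+N_y$. For $S\subseteq\{1,\dots,q\}$, $S^c$ is its complement, $W_S$ the subvector, $\mathbf{A}_S$ the rows of $\mathbf{A}$ indexed by $S$, $\mathbf{D}_S=\operatorname{diag}(\sigma_{w,i}^2)_{i\in S}$. $\hat\beta(S)=(I_d,\mathbf{0})\operatorname{Var}((X,W_S))^{-1}\operatorname{Cov}((X,W_S),Y)$. $\mathbf{C}(S)\in\mathbb{R}^{d\times q}$ has zero columns for indices in $S$, and its columns indexed by $S^c$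 form $\mathbf{D}_x^{-1}\mathbf{B}(I_r+\mathbf{B}^\top\mathbf{D}_x^{-1}\mathbf{B}+\mathbf{A}_S^\top\mathbf{D}_S^{-1}\mathbf{A}_S)^{-1}\mathbf{A}_{S^c}^\top$. *)

From mathcomp Require Import all_boot all_order all_algebra.
Set Implicit Arguments. Unset Strict Implicit. Unset Printing Implicit Defensive.
Import Order.TTheory GRing.Theory Num.Theory.
Local Open Scope ring_scope.

(* A covariance form on a real vector space V of (square-integrable, zero-mean)
   random variables: symmetric, bilinear, positive semidefinite. *)
Definition covariance_form (R : realFieldType) (V : lmodType R) (cov : V -> V -> R) :=
  [/\ (forall (a : R) (u v w : V), cov (a *: u + v) w = a * cov u w + cov v w),
      (forall u v : V, cov u v = cov v u)
    & (forall v : V, 0 <= cov v v)].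

Section SEM.
Variables (R : realFieldType) (V : lmodType R) (cov : V -> V -> R).
Variables (r q d : nat).
Variables (nz : 'I_r -> V) (nw : 'I_q -> V) (nx : 'I_d -> V) (ny : V).
Variables (A : 'M[R]_(q, r)) (B : 'M[R]_(d, r)) (beta : 'cV[R]_d) (gamma : 'cV[R]_q).

Definition semZ (k : 'I_r) : V := nz k.
Definition semW (j : 'I_q) : V := \sum_(k < r) A j k *: semZ k + nw j.
Definition semX (i : 'I_d) : V := \sum_(k < r) B i k *: semZ k + nx i.
Definition semY : V :=
  \sum_(i < d) beta i 0 *: semX i + \sum_(j < q) gamma j 0 *: semW j + ny.

(* the vector (X, W_S), indexed by 'I_(d + #|S|); W_S lists W_j, j in S, in increasing order *)
Definition semXWS (S : {set 'I_q}) (k : 'I_(d + #|S|)) : V :=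
  match split k with
  | inl i => semX i
  | inr s => semW (enum_val s)
  end.

Definition VarXWS (S : {set 'I_q}) : 'M[R]_(d + #|S|) :=
  \matrix_(k, l) cov (semXWS k) (semXWS l).
Definition CovXWSY (S : {set 'I_q}) : 'cV[R]_(d + #|S|) :=
  \col_k cov (semXWS k) semY.

Definition betahat (S : {set 'I_q}) : 'cV[R]_d :=
  row_mx (1%:M : 'M[R]_d) (0 : 'M[R]_(d, #|S|)) *m invmx (VarXWS S) *m CovXWSY S.
End SEM.

Section CMat.
Variables (R : realFieldType) (r q d : nat).
Variables (A : 'M[R]_(q, r)) (B : 'M[R]_(d, r)) (dx : 'I_d -> R) (sw : 'I_q -> R).

Definition Dx : 'M[R]_d := diag_mx (\row_i dx i).
Definition Asub (T : {set 'I_q}) : 'M[R]_(#|T|, r) := \matrix_(i, k) A (enum_val i) k.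
Definition Dsub (T : {set 'I_q}) : 'M[R]_(#|T|) := diag_mx (\row_i sw (enum_val i)).
Definition Ccols (S : {set 'I_q}) : 'M[R]_(d, #|~: S|) :=
  invmx Dx *m B *m
  invmx (1%:M + B^T *m invmx Dx *m B + (Asub S)^T *m invmx (Dsub S) *m Asub S) *m
  (Asub (~: S))^T.
(* embedding of the S^c-indexed columns into 'I_q (zero columns at indices in S) *)
Definition embed_cols (T : {set 'I_q}) : 'M[R]_(#|T|, q) :=
  \matrix_(k, j) (enum_val k == j)%:R.
Definition Cmat (S : {set 'I_q}) : 'M[R]_(d, q) := Ccols S *m embed_cols (~: S).
End CMat.

(** Write (X, W_S) = G Z + U with loading matrix G = (B; A_S) and a noise vector U
    of diagonal covariance D, uncorrelated with Z.  Then Var((X, W_S)) = G G^T + D,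
    and since Y = (B^T beta + A^T gamma)^T Z + (noise), its covariance with (X, W_S)
    is Var((X, W_S)) v + G w, where v = (beta, gamma_S) and w = A_{S^c}^T gamma_{S^c}
    collects the contribution of the omitted W_{S^c}.  Hence
    Var^{-1} Cov = v + Var^{-1} G w, and the Woodbury identity
    (G G^T + D)^{-1} G = D^{-1} G (I + G^T D^{-1} G)^{-1} turns the first d rows of
    this into beta + C(S) gamma.  Positivity of the noise variances makes
    I + G^T D^{-1} G invertible. *)

From mathcomp Require Import all_boot all_order all_algebra.
Import Order.TTheory GRing.Theory Num.Theory.
Local Open Scope ring_scope.
Set Implicit Arguments. Unset Strict Implicit.

Section CovarianceForm.
Variables (R : realFieldType) (V : lmodType R) (cov : V -> V -> R).
Hypothesis Hcov : covariance_form cov.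

Lemma covC u v : cov u v = cov v u.
Proof. by case: Hcov. Qed.

Lemma covDl u v w : cov (u + v) w = cov u w + cov v w.
Proof. by case: Hcov => L _ _; rewrite -[u]scale1r L mul1r scale1r. Qed.

Lemma cov0l w : cov 0 w = 0.
Proof. by apply: (@addrI _ (cov 0 w)); rewrite -covDl !addr0. Qed.

Lemma covZl a u w : cov (a *: u) w = a * cov u w.
Proof. by case: Hcov => L _ _; rewrite -[a *: u]addr0 L cov0l addr0. Qed.

Lemma covDr u v w : cov w (u + v) = cov w u + cov w v.
Proof. by rewrite !(covC w) covDl. Qed.

Lemma cov_lincombl n (a : 'I_n -> R) (e : 'I_n -> V) w :
  cov (\sum_i a i *: e i) w = \sum_i a i * cov (e i) w.
Proof.
elim/big_rec2: _ => [|i y1 y2 _ <-]; first exact: cov0l.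
by rewrite covDl covZl.
Qed.

Lemma cov_lincombr n (a : 'I_n -> R) (e : 'I_n -> V) w :
  cov w (\sum_i a i *: e i) = \sum_i a i * cov w (e i).
Proof. by rewrite covC cov_lincombl; under eq_bigr do rewrite covC. Qed.

Section OrthonormalFactor.
Variables (n : nat) (e : 'I_n -> V).
Hypothesis He : forall k l, cov (e k) (e l) = (k == l)%:R.

Lemma cov_lincomb_orthonormal (a : 'I_n -> R) k : cov (\sum_l a l *: e l) (e k) = a k.
Proof.
rewrite cov_lincombl (bigD1 k) //= He eqxx mulr1 big1 ?addr0 // => l /negbTE lk.
by rewrite He lk mulr0.
Qed.

Lemma cov_factor (a b : 'I_n -> R) u1 u2 :
  (forall k, cov (e k) u1 = 0) -> (forall k, cov (e k) u2 = 0) ->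
  cov (\sum_l a l *: e l + u1) (\sum_l b l *: e l + u2) = \sum_l a l * b l + cov u1 u2.
Proof.
move=> He1 He2.
have noise_uncorr u b' : (forall k, cov (e k) u = 0) -> cov (\sum_l b' l *: e l) u = 0.
  by move=> Heu; rewrite cov_lincombl big1 // => k _; rewrite Heu mulr0.
rewrite covDl !covDr (noise_uncorr u2) // (covC u1) (noise_uncorr u1) // addr0 add0r.
rewrite cov_lincombr; congr (_ + _); apply: eq_bigr => l _.
by rewrite cov_lincomb_orthonormal mulrC.
Qed.

End OrthonormalFactor.
End CovarianceForm.

Section FactorInverse.
Variables (R : fieldType) (n m : nat) (G : 'M[R]_(n, m)) (D Dinv : 'M[R]_n).
Hypothesis HD : D *m Dinv = 1%:M.
Let K := 1%:M + G^T *m Dinv *m G.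
Hypothesis HK : K \in unitmx.

Lemma woodbury : (G *m G^T + D) \in unitmx /\
  invmx (G *m G^T + D) *m G = Dinv *m G *m invmx K.
Proof.
have GDK : (G *m G^T + D) *m (Dinv *m G *m invmx K) = G.
  have GGK : G *m (G^T *m Dinv *m G) + G = G *m K by rewrite /K mulmxDr mulmx1 addrC.
  rewrite mulmxDl [D *m _]mulmxA [D *m _]mulmxA HD mul1mx !mulmxA -!(mulmxA G).
  by rewrite mulmxA -mulmxDl GGK -mulmxA mulmxV // mulmx1.
have inv : (G *m G^T + D) *m (Dinv - Dinv *m G *m invmx K *m G^T *m Dinv) = 1%:M.
  have -> : Dinv *m G *m invmx K *m G^T *m Dinv = (Dinv *m G *m invmx K) *m (G^T *m Dinv)
    by rewrite !mulmxA.
  by rewrite mulmxBr (mulmxA (G *m G^T + D)) GDK mulmxDl HD mulmxA addrAC subrr add0r.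
have [Vu _] := mulmx1_unit inv.
by split=> //; apply: (canLR (mulKmx Vu)); rewrite GDK.
Qed.

Lemma factor_regression (v : 'cV[R]_n) (w : 'cV[R]_m) :
  invmx (G *m G^T + D) *m ((G *m G^T + D) *m v + G *m w) = v + Dinv *m G *m invmx K *m w.
Proof. by have [Vu VG] := woodbury; rewrite mulmxDr mulKmx // mulmxA VG. Qed.

End FactorInverse.

Lemma diag_mx_mulV (R : fieldType) n (c : 'rV[R]_n) : (forall i, c 0 i != 0) ->
  diag_mx c *m diag_mx (\row_i (c 0 i)^-1) = 1%:M.
Proof.
move=> c_neq0; rewrite mulmx_diag -diag_const_mx; congr diag_mx.
by apply/rowP => i; rewrite !mxE mulfV.
Qed.

Lemma invmx_diag (R : fieldType) n (c : 'rV[R]_n) : (forall i, c 0 i != 0) ->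
  invmx (diag_mx c) = diag_mx (\row_i (c 0 i)^-1).
Proof.
move=> /diag_mx_mulV cV; have [cu _] := mulmx1_unit cV.
by rewrite -[invmx _]mulmx1 -cV mulmxA mulVmx // mul1mx.
Qed.

Lemma unitmx_1_add_gram (R : realFieldType) n m (G : 'M[R]_(n, m)) (c : 'rV[R]_n) :
  (forall i, 0 <= c 0 i) -> 1%:M + G^T *m diag_mx c *m G \in unitmx.
Proof.
move=> c_ge0; set K := _ + _.
have quad_diag (y : 'rV_n) : (y *m diag_mx c *m y^T) 0 0 = \sum_j c 0 j * y 0 j ^+ 2.
  by rewrite mul_mx_diag mxE; apply: eq_bigr => j _; rewrite !mxE mulrAC expr2 mulrC.
rewrite -row_free_unit -kermx_eq0; apply/eqP/row_matrixP => i; rewrite row0.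
have : row i (kermx K) *m K = 0 by rewrite -row_mul mulmx_ker row0.
move: (row i _) => u uK.
have quadK : (u *m K *m u^T) 0 0 = \sum_j u 0 j ^+ 2 + \sum_j c 0 j * (u *m G^T) 0 j ^+ 2.
  rewrite mulmxDr mulmx1 mulmxDl mxE -quad_diag trmx_mul trmxK !mulmxA mxE.
  by congr (_ + _); apply: eq_bigr => j _; rewrite mxE expr2.
move: quadK; rewrite uK mul0mx mxE => /esym/eqP.
rewrite paddr_eq0 ?sumr_ge0 // => [/andP[u2_0 _]|j _|j _]; last 2 first.
- exact: sqr_ge0.
- by rewrite mulr_ge0 ?sqr_ge0.
apply/rowP => j; rewrite mxE; apply/eqP; rewrite -sqrf_eq0.
by move: u2_0; rewrite psumr_eq0 => [/allP/(_ j (mem_index_enum _))|k _]; rewrite ?sqr_ge0.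
Qed.

Lemma sum_delta_mul (R : pzSemiRingType) (I : finType) (i : I) (f : I -> R) :
  \sum_j (i == j)%:R * f j = f i.
Proof.
rewrite (bigD1 i) //= eqxx mul1r big1 ?addr0 // => j.
by rewrite eq_sym => /negbTE ->; rewrite mul0r.
Qed.

Lemma Asub_embed_cols (R : realFieldType) q r (A : 'M[R]_(q, r)) (T : {set 'I_q}) :
  Asub A T = embed_cols R T *m A.
Proof.
apply/matrixP => i k; rewrite !mxE (bigD1 (enum_val i)) //= mxE eqxx mul1r big1 ?addr0 //.
by move=> j /negbTE nj; rewrite mxE eq_sym nj mul0r.
Qed.

Lemma embed_cols_complement (R : realFieldType) q (S : {set 'I_q}) :
  (embed_cols R S)^T *m embed_cols R S + (embed_cols R (~: S))^T *m embed_cols R (~: S)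
  = 1%:M.
Proof.
apply/matrixP => j j'; rewrite !mxE.
have gram T : \sum_k (embed_cols R T)^T j k * embed_cols R T k j' =
    \sum_(x in T) ((x == j)%:R * (x == j')%:R).
  by rewrite [RHS]big_enum_val; apply: eq_bigr => k _; rewrite !mxE.
rewrite !gram; transitivity (\sum_x ((x == j)%:R * (x == j')%:R : R)).
  by rewrite [RHS](bigID (mem S)) /=; congr (_ + _); apply: eq_bigl => x; rewrite inE.
by under eq_bigr => x _ do rewrite [x == j]eq_sym; rewrite sum_delta_mul.
Qed.

Section SEMFactorForm.
Variables (R : realFieldType) (V : lmodType R) (cov : V -> V -> R).
Hypothesis Hcov : covariance_form cov.
Variables (r q d : nat) (nz : 'I_r -> V) (nw : 'I_q -> V) (nx : 'I_d -> V) (ny : V).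
Variables (sw : 'I_q -> R) (dx : 'I_d -> R).
Variables (A : 'M[R]_(q, r)) (B : 'M[R]_(d, r)) (beta : 'cV[R]_d) (gamma : 'cV[R]_q).
Hypothesis Hsw : forall j, 0 < sw j.
Hypothesis Hdx : forall i, 0 < dx i.
Hypothesis Hzz : forall k l, cov (nz k) (nz l) = (k == l)%:R.
Hypothesis Hww : forall j j', cov (nw j) (nw j') = (j == j')%:R * sw j.
Hypothesis Hxx : forall i i', cov (nx i) (nx i') = (i == i')%:R * dx i.
Hypothesis Hzw : forall k j, cov (nz k) (nw j) = 0.
Hypothesis Hzx : forall k i, cov (nz k) (nx i) = 0.
Hypothesis Hzy : forall k, cov (nz k) ny = 0.
Hypothesis Hwx : forall j i, cov (nw j) (nx i) = 0.
Hypothesis Hwy : forall j, cov (nw j) ny = 0.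
Hypothesis Hxy : forall i, cov (nx i) ny = 0.
Variable S : {set 'I_q}.

Definition loadXWS : 'M[R]_(d + #|S|, r) := col_mx B (Asub A S).

Definition noiseXWS (k : 'I_(d + #|S|)) : V :=
  match split k with inl i => nx i | inr s => nw (enum_val s) end.

Definition noise_varXWS : 'M[R]_(d + #|S|) := block_mx (Dx dx) 0 0 (Dsub sw S).

Definition noise_varXWS_inv : 'M[R]_(d + #|S|) :=
  block_mx (invmx (Dx dx)) 0 0 (invmx (Dsub sw S)).

Definition loadY : 'cV[R]_r := B^T *m beta + A^T *m gamma.

Definition noiseY : V := \sum_i beta i 0 *: nx i + \sum_j gamma j 0 *: nw j + ny.

Lemma semXWS_factor k : semXWS nz nw nx A B k = \sum_l loadXWS k l *: nz l + noiseXWS k.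
Proof.
rewrite /semXWS /noiseXWS /loadXWS; under eq_bigr do rewrite mxE.
case: (split k) => [i|s] /=; first by rewrite /semX /semZ.
by rewrite /semW /semZ; under eq_bigr do rewrite mxE.
Qed.

Lemma semY_factor : semY nz nw nx ny A B beta gamma = \sum_l loadY l 0 *: nz l + noiseY.
Proof.
have expand n (M : 'M[R]_(n, r)) (b : 'cV[R]_n) (e : 'I_n -> V) :
    \sum_i b i 0 *: (\sum_l M i l *: nz l + e i) =
    \sum_l (M^T *m b) l 0 *: nz l + \sum_i b i 0 *: e i.
  under eq_bigr do rewrite scalerDr scaler_sumr.
  rewrite big_split /= exchange_big; congr (_ + _); apply: eq_bigr => l _.
  by rewrite mxE scaler_suml; apply: eq_bigr => i _; rewrite scalerA mxE mulrC.
rewrite /semY /semX /semW /semZ /noiseY /loadY !expand.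
under [in RHS]eq_bigr do rewrite mxE scalerDl.
by rewrite big_split /= addrACA !addrA.
Qed.

Lemma cov_nz_noiseXWS l k : cov (nz l) (noiseXWS k) = 0.
Proof. by rewrite /noiseXWS; case: (split k). Qed.

Lemma cov_nz_noiseY l : cov (nz l) noiseY = 0.
Proof.
rewrite /noiseY !(covDr Hcov) !(cov_lincombr Hcov) Hzy addr0.
by rewrite !big1 ?addr0 // => i _; rewrite ?Hzx ?Hzw mulr0.
Qed.

Lemma VarXWS_factor : VarXWS cov nz nw nx A B S = loadXWS *m loadXWS^T + noise_varXWS.
Proof.
apply/matrixP => k k'; rewrite [LHS]mxE !semXWS_factor.
rewrite (cov_factor Hcov Hzz _ _ (cov_nz_noiseXWS^~ k) (cov_nz_noiseXWS^~ k')).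
rewrite [RHS]mxE; congr (_ + _).
  by rewrite mxE; apply: eq_bigr => l _; rewrite [_^T _ _]mxE.
rewrite /noiseXWS /noise_varXWS [block_mx _ _ _ _ _ _]mxE.
case: (split k) => [i|s]; rewrite mxE; case: (split k') => [i'|s']; rewrite !mxE //.
- by rewrite Hxx mulr_natl.
- by rewrite (covC Hcov) Hwx.
- by rewrite Hww mulr_natl (inj_eq enum_val_inj).
Qed.

Lemma CovXWSY_factor : CovXWSY cov nz nw nx ny A B beta gamma S =
  loadXWS *m loadY + noise_varXWS *m col_mx beta (embed_cols R S *m gamma).
Proof.
apply/matrixP => k j0; rewrite (ord1 j0) [LHS]mxE semXWS_factor semY_factor.
rewrite (cov_factor Hcov Hzz _ _ (cov_nz_noiseXWS^~ k) cov_nz_noiseY) [RHS]mxE.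
congr (_ + _); first by rewrite mxE.
rewrite /noise_varXWS mul_block_col !mul0mx addr0 add0r /Dx /Dsub !mul_diag_mx.
rewrite /noiseXWS /noiseY mxE; case: (split k) => [i|s]; rewrite !mxE !(covDr Hcov).
- rewrite !(cov_lincombr Hcov) Hxy addr0 [X in _ + X]big1 ?addr0 => [|j _]; last first.
    by rewrite (covC Hcov) Hwx mulr0.
  by under eq_bigr do rewrite Hxx mulrCA; rewrite sum_delta_mul mulrC.
- rewrite !(cov_lincombr Hcov) Hwy addr0 big1 ?add0r => [|i _]; last by rewrite Hwx mulr0.
  under eq_bigr do rewrite Hww mulrCA; rewrite sum_delta_mul mulrC; congr (_ * _).
  by under eq_bigr do rewrite mxE; rewrite sum_delta_mul.
Qed.

Lemma loadY_split : loadY = loadXWS^T *m col_mx beta (embed_cols R S *m gamma) +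
  (Asub A (~: S))^T *m (embed_cols R (~: S) *m gamma).
Proof.
rewrite /loadY /loadXWS tr_col_mx mul_row_col !Asub_embed_cols !trmx_mul -addrA.
congr (_ + _); rewrite -[gamma in LHS]mul1mx -(embed_cols_complement R S).
by rewrite mulmxDl mulmxDr !mulmxA.
Qed.

Lemma CovXWSY_regression : CovXWSY cov nz nw nx ny A B beta gamma S =
  (loadXWS *m loadXWS^T + noise_varXWS) *m col_mx beta (embed_cols R S *m gamma) +
  loadXWS *m ((Asub A (~: S))^T *m (embed_cols R (~: S) *m gamma)).
Proof. by rewrite CovXWSY_factor loadY_split mulmxDr mulmxDl mulmxA addrAC. Qed.

Lemma noise_varXWS_mulV : noise_varXWS *m noise_varXWS_inv = 1%:M.
Proof.
rewrite /noise_varXWS /noise_varXWS_inv mulmx_block !mulmx0 !mul0mx !addr0 !add0r.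
rewrite /Dx /Dsub !invmx_diag ?diag_mx_mulV ?scalar_mx_block // => i; rewrite mxE gt_eqF //.
Qed.

Lemma noise_varXWS_invE : noise_varXWS_inv =
  diag_mx (row_mx (\row_i (dx i)^-1) (\row_i (sw (enum_val i))^-1)).
Proof.
rewrite diag_mx_row /noise_varXWS_inv /Dx /Dsub !invmx_diag => [|i|i]; rewrite ?mxE ?gt_eqF //.
by congr block_mx; congr diag_mx; apply/rowP => i; rewrite !mxE.
Qed.

Lemma unitmx_gram_XWS : 1%:M + loadXWS^T *m noise_varXWS_inv *m loadXWS \in unitmx.
Proof.
rewrite noise_varXWS_invE; apply: unitmx_1_add_gram => k.
by rewrite mxE; case: (split k) => i; rewrite mxE invr_ge0 ltW.
Qed.

Lemma gram_XWSE : 1%:M + loadXWS^T *m noise_varXWS_inv *m loadXWS =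
  1%:M + B^T *m invmx (Dx dx) *m B + (Asub A S)^T *m invmx (Dsub sw S) *m Asub A S.
Proof.
rewrite /loadXWS /noise_varXWS_inv tr_col_mx mul_row_block !mulmx0 addr0 add0r.
by rewrite mul_row_col addrA.
Qed.

Lemma noise_varXWS_inv_mul_load : noise_varXWS_inv *m loadXWS =
  col_mx (invmx (Dx dx) *m B) (invmx (Dsub sw S) *m Asub A S).
Proof. by rewrite mul_block_col !mul0mx addr0 add0r. Qed.

End SEMFactorForm.

Unset Implicit Arguments.

Theorem mainTheorem3 (R : realFieldType) (V : lmodType R) (cov : V -> V -> R)
  (r q d : nat) (hr : (0 < r)%N) (hq : (0 < q)%N) (hd : (0 < d)%N)
  (nz : 'I_r -> V) (nw : 'I_q -> V) (nx : 'I_d -> V) (ny : V)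
  (sw : 'I_q -> R) (dx : 'I_d -> R) (sy : R)
  (A : 'M[R]_(q, r)) (B : 'M[R]_(d, r)) (beta : 'cV[R]_d) (gamma : 'cV[R]_q)
  (Hcov : covariance_form cov)
  (Hsw : forall j, 0 < sw j) (Hdx : forall i, 0 < dx i)
  (Hzz : forall k l, cov (nz k) (nz l) = (k == l)%:R)
  (Hww : forall j j', cov (nw j) (nw j') = (j == j')%:R * sw j)
  (Hxx : forall i i', cov (nx i) (nx i') = (i == i')%:R * dx i)
  (Hyy : cov ny ny = sy)
  (Hzw : forall k j, cov (nz k) (nw j) = 0)
  (Hzx : forall k i, cov (nz k) (nx i) = 0)
  (Hzy : forall k, cov (nz k) ny = 0)
  (Hwx : forall j i, cov (nw j) (nx i) = 0)
  (Hwy : forall j, cov (nw j) ny = 0)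
  (Hxy : forall i, cov (nx i) ny = 0)
  (S : {set 'I_q}) :
  betahat cov nz nw nx ny A B beta gamma S = beta + Cmat A B dx sw S *m gamma.
Proof.
rewrite /betahat -mulmxA (VarXWS_factor Hcov A B Hzz Hww Hxx Hzw Hzx Hwx).
rewrite (CovXWSY_regression Hcov A B beta gamma Hzz Hww Hxx Hzw Hzx Hzy Hwx Hwy Hxy).
rewrite (factor_regression (noise_varXWS_mulV Hsw Hdx S) (unitmx_gram_XWS A B Hsw Hdx S)).
rewrite noise_varXWS_inv_mul_load gram_XWSE mulmxDr !mulmxA !mul_row_col.
by rewrite !mul1mx !mul0mx !addr0.
Qed.
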